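(* Let $X,Y,A,B$ be non-empty finite sets. Then $\mathsf{QC}(\mathcal R_{\rm loc})=\mathcal Q_{\rm loc}$.
   Context: For a block operator isometry $W=(W_{c,z})_{c\in C,z\in Z}:H^Z\to K^C$ (entries $W_{c,z}\in\mathcal B(H,K)$) and a normal state $\sigma$ on $\mathcal B(H)$, $\Gamma_{W,\sigma}:M_Z\to M_C$ is the channel $\Gamma_{W,\sigma}(\epsilon_{z,z'})=\sum_{c,c'}\sigma(W_{c,z}^*W_{c',z'})\epsilon_{c,c'}$; for a family $\mathcal R$, $\mathsf{QC}(\mathcal R)=\{\Gamma_{W,\sigma}:W\in\mathcal R,\sigma\text{ normal state}\}$. An isometry $U:\mathbb C^X\to\mathbb C^A\otimes\mathbb C^S$ ($S$ finite) is regarded as a block operator isometry over $(X,A)$ with entries $U_{a,x}\in\mathcal B(\mathbb C,\mathbb C^S)$ determined by $Ue_x=\sum_a e_a\otimes U_{a,x}$; similarly $V:\mathbb C^Y\to\mathbb C^B\otimes\mathbb C^T$. Then $U\otimes V$ is the block operator isometry over $(X\times Y,A\times B)$ with entries $U_{a,x}\otimes V_{b,y}$. $\mathcal R_{\rm loc}$ is the set of all finite direct sums (entrywise) of such $U\otimes V$, over all finite sets $S,T$ and all isometries $U,V$. $\mathcal Q_{\rm loc}$ is the set of convex combinations $\sum_i\lambda_i\Phi_i\otimes\Psi_i$, where $\Phi_i:M_X\to M_A$ and $\Psi_i:M_Y\to M_B$ are quantum channels (completely positive trace preserving maps). *)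

(* All Hilbert spaces occurring in
   the statement are finite dimensional C^I, I a finType; operators
   C^J -> C^I are matrices, represented as functions I -> J -> C. *)
From HB Require Import structures.
From mathcomp Require Import all_boot all_order all_algebra.
From mathcomp Require Import reals complex.
Set Implicit Arguments. Unset Strict Implicit. Unset Printing Implicit Defensive.
Import Order.TTheory GRing.Theory Num.Theory.
Local Open Scope ring_scope.
Local Open Scope complex_scope.

Section QCDefs.
Variable R : realType.
Local Notation C := R[i].

Definition mx (I J : Type) := I -> J -> C.

Definition mxmul (I J K : finType) (M : mx I J) (N : mx J K) : mx I K :=
  fun i k => \sum_j M i j * N j k.
Definition adj (I J : Type) (M : mx I J) : mx J I := fun j i => (M i j)^*.
Definition idm (I : finType) : mx I I := fun i j => (i == j)%:R.
Definition mtr (I : finType) (M : mx I I) : C := \sum_i M i i.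
Definition eunit (I : finType) (x x' : I) : mx I I :=
  fun i j => ((i == x) && (j == x'))%:R.
Definition psd (I : finType) (M : mx I I) : Prop :=
  forall v : I -> C, 0 <= \sum_i \sum_j (v i)^* * M i j * v j.
Definition isometry (I J : finType) (U : mx I J) : Prop :=
  forall j j', mxmul (adj U) U j j' = @idm J j j'.

Definition linear_map (I J : finType) (Phi : mx I I -> mx J J) : Prop :=
  forall (a : C) (rho sigma : mx I I) j j',
    Phi (fun x y => a * rho x y + sigma x y) j j' = a * Phi rho j j' + Phi sigma j j'.
(* completely positive: id_{M_n} (x) Phi is positive for every n *)
Definition completely_positive (I J : finType) (Phi : mx I I -> mx J J) : Prop :=
  forall (n : nat) (rho : mx ('I_n * I) ('I_n * I)), psd rho ->
    psd (fun (p q : 'I_n * J) => Phi (fun x y => rho (p.1, x) (q.1, y)) p.2 q.2).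
Definition trace_preserving (I J : finType) (Phi : mx I I -> mx J J) : Prop :=
  forall rho, mtr (Phi rho) = mtr rho.
Definition quantum_channel (I J : finType) (Phi : mx I I -> mx J J) : Prop :=
  [/\ linear_map Phi, completely_positive Phi & trace_preserving Phi].

(* Phi (x) Psi : M_{X x Y} -> M_{A x B}, the linear extension of
   eps_{x,x'} (x) eps_{y,y'} |-> Phi(eps_{x,x'}) (x) Psi(eps_{y,y'}) *)
Definition tensor_map (X Y A B : finType) (Phi : mx X X -> mx A A)
    (Psi : mx Y Y -> mx B B) : mx (X * Y) (X * Y) -> mx (A * B) (A * B) :=
  fun rho p q => \sum_x \sum_x' \sum_y \sum_y'
     rho (x, y) (x', y') * Phi (eunit x x') p.1 q.1 * Psi (eunit y y') p.2 q.2.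

Definition Qloc (X Y A B : finType)
    (Phi : mx (X * Y) (X * Y) -> mx (A * B) (A * B)) : Prop :=
  exists (J : finType) (lam : J -> R)
         (Phis : J -> mx X X -> mx A A) (Psis : J -> mx Y Y -> mx B B),
    [/\ forall j, 0 <= lam j,
        \sum_j lam j = 1,
        forall j, quantum_channel (Phis j),
        forall j, quantum_channel (Psis j) &
        forall rho p q, Phi rho p q =
          \sum_j (lam j)%:C * tensor_map (Phis j) (Psis j) rho p q].

(* block operator W = (W_{c,z}) : H^Z -> K^Cc, entries W_{c,z} in B(C^H, C^K) *)
Definition block_op (Cc Z H K : Type) := Cc -> Z -> mx K H.

(* (normal) state on B(C^H): positive unital linear functional
   (in finite dimension every state is normal) *)
Definition state (H : finType) (sigma : mx H H -> C) : Prop :=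
  [/\ forall (a : C) (S T : mx H H),
        sigma (fun x y => a * S x y + T x y) = a * sigma S + sigma T,
      forall T : mx H H, 0 <= sigma (mxmul (adj T) T) &
      sigma (@idm H) = 1].

Definition Gamma (Cc Z H K : finType) (W : block_op Cc Z H K)
    (sigma : mx H H -> C) : mx Z Z -> mx Cc Cc :=
  fun rho c c' => \sum_z \sum_z' rho z z' * sigma (mxmul (adj (W c z)) (W c' z')).

(* The entrywise direct sum over i in I of U_i (x) V_i, where
   U_i : C^X -> C^A (x) C^(S i),  V_i : C^Y -> C^B (x) C^(T i)
   (so (U_i)_{a,x} = (s |-> U_i (a,s) x) in B(C, C^(S i))).
   It is a block operator over (X x Y, A x B) with H = C^I (direct sum of
   copies of C (x) C) and K = C^{(+)_i S i x T i}. *)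
Definition locW (X Y A B I : finType) (S T : I -> finType)
    (U : forall i, mx (A * S i) X) (V : forall i, mx (B * T i) Y) :
    block_op (A * B) (X * Y) I {i : I & (S i * T i)%type} :=
  fun c z k j => (tag k == j)%:R * U (tag k) (c.1, (tagged k).1) z.1
                                 * V (tag k) (c.2, (tagged k).2) z.2.

Definition QC_Rloc (X Y A B : finType)
    (Phi : mx (X * Y) (X * Y) -> mx (A * B) (A * B)) : Prop :=
  exists (I : finType) (S T : I -> finType)
         (U : forall i, mx (A * S i) X) (V : forall i, mx (B * T i) Y)
         (sigma : mx I I -> C),
    [/\ forall i, isometry (U i),
        forall i, isometry (V i),
        state sigma &
        forall rho p q, Phi rho p q = Gamma (locW U V) sigma rho p q].

End QCDefs.

(* A block operator in R_loc is an entrywise direct sum over i of U_i (x) V_i,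
   and sigma(W_{c,z}^* W_{c',z'}) only sees the diagonal weights sigma(e_ii) of
   the state.  Hence Gamma_{W,sigma} is the convex combination, with weights
   sigma(e_ii), of the tensor products of the Stinespring channels of U_i and
   V_i.  Conversely, every channel has a Stinespring isometry, read off from a
   Gram factorisation of its positive Choi matrix, and a convex combination
   with weights lam_j is realised by the diagonal state M |-> sum_j lam_j M_jj. *)

From HB Require Import structures.
From mathcomp Require Import all_boot all_order all_algebra.
From mathcomp Require Import boolp reals complex ring.
Set Implicit Arguments. Unset Strict Implicit. Unset Printing Implicit Defensive.
Import Order.TTheory GRing.Theory Num.Theory.
Local Open Scope ring_scope.

Section QuantumChannels.
Variable R : realType.
Local Notation C := R[i].

Lemma sum_delta_l (I : finType) (F : I -> C) i : \sum_k (k == i)%:R * F k = F i.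
Proof. by rewrite (bigD1 i) //= eqxx mul1r big1 ?addr0 // => k /negbTE ->; rewrite mul0r. Qed.

Lemma sum_delta_r (I : finType) (F : I -> C) i : \sum_k F k * (k == i)%:R = F i.
Proof. by under eq_bigr do rewrite mulrC; exact: sum_delta_l. Qed.

Definition qform (I : finType) (M : mx R I I) (v : I -> C) : C :=
  \sum_i \sum_j (v i)^* * M i j * v j.

Lemma qform_add_delta (I : finType) (M : mx R I I) v c i :
  qform M (fun k => v k + c * (k == i)%:R) =
  qform M v + c^* * (\sum_j M i j * v j) + c * (\sum_k (v k)^* * M k i)
  + c^* * c * M i i.
Proof.
have expand k l : (v k + c * (k == i)%:R)^* * M k l * (v l + c * (l == i)%:R) =
  (v k)^* * M k l * v l + ((v k)^* * M k l * c) * (l == i)%:R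
  + (k == i)%:R * (c^* * M k l * v l) + (k == i)%:R * ((c^* * M k l * c) * (l == i)%:R).
  by rewrite rmorphD rmorphM /= conjC_nat; ring.
rewrite /qform; under eq_bigr do under eq_bigr do rewrite expand.
under eq_bigr do rewrite !big_split /= sum_delta_r -!mulr_sumr sum_delta_r.
rewrite !big_split /= !sum_delta_l !mulr_sumr -!addrA; congr (_ + _).
rewrite addrCA; congr (_ + (_ + _)); last by ring.
all: by apply: eq_bigr => k _; ring.
Qed.

Lemma qform_delta (I : finType) (M : mx R I I) a i :
  qform M (fun k => a * (k == i)%:R) = a^* * a * M i i.
Proof.
have term k l : (a * (k == i)%:R)^* * M k l * (a * (l == i)%:R) =
    (k == i)%:R * ((l == i)%:R * (a^* * a * M k l)).
  by rewrite rmorphM /= conjC_nat; ring.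
rewrite /qform; under eq_bigr do under eq_bigr do rewrite term.
by under eq_bigr do rewrite -mulr_sumr sum_delta_l; rewrite sum_delta_l.
Qed.

Lemma qform_two (I : finType) (M : mx R I I) a b i j :
  qform M (fun k => a * (k == i)%:R + b * (k == j)%:R) =
  a^* * a * M i i + a^* * b * M i j + b^* * a * M j i + b^* * b * M j j.
Proof.
rewrite qform_add_delta qform_delta.
have -> : \sum_l M j l * (a * (l == i)%:R) = a * M j i.
  by under eq_bigr do rewrite mulrCA; rewrite -mulr_sumr sum_delta_r.
have -> : \sum_k (a * (k == i)%:R)^* * M k j = a^* * M i j.
  by under eq_bigr do rewrite rmorphM /= conjC_nat -mulrA; rewrite -mulr_sumr sum_delta_l.
by ring.
Qed.

Lemma psd_diag (I : finType) (M : mx R I I) i : psd M -> 0 <= M i i.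
Proof.
move=> hM; have := hM (fun k => 1 * (k == i)%:R).
by rewrite -/(qform M _) qform_delta conjC1 !mul1r.
Qed.

Lemma psd_herm (I : finType) (M : mx R I I) i j : psd M -> M j i = (M i j)^*.
Proof.
move=> hM.
have real_diag k : (M k k)^* = M k k by rewrite geC0_conj // psd_diag.
have real_qform v : (qform M v)^* - qform M v = 0 by rewrite geC0_conj ?subrr //; exact: hM.
have := real_qform (fun k => 1 * (k == i)%:R + 1 * (k == j)%:R).
have := real_qform (fun k => 1 * (k == i)%:R + 'i * (k == j)%:R).
rewrite !qform_two !(rmorphD, rmorphM) /= !conjCK !conjC1 conjCi !real_diag.
set s := M i j; set t := M j i => h2 h1.
have e1 : s^* + t^* - s - t = 0 by rewrite -h1; ring.
have e2 : 'i * (t^* - s^* - s + t) = 0 by rewrite -h2; ring.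
move/eqP: e2; rewrite mulf_eq0 (negbTE (neq0Ci C)) /= => /eqP e2.
have : (t - s^*) * 2 = (t^* - s^* - s + t) - (s^* + t^* - s - t) by ring.
rewrite e1 e2 subr0 => /eqP; rewrite mulf_eq0 pnatr_eq0 orbF subr_eq0.
by move/eqP.
Qed.

Lemma psd_zero_row (I : finType) (M : mx R I I) i j :
  psd M -> M i i = 0 -> M i j = 0.
Proof.
move=> hM mii; apply/eqP; apply: contraT => s_neq0.
have sc_neq0 : (M i j)^* != 0 by rewrite conjC_eq0.
pose r := (M j j + 1) / 2.
have r_ge0 : 0 <= r by rewrite divr_ge0 // addr_ge0 // psd_diag.
have r2 : r * 2 = M j j + 1 by rewrite divfK ?pnatr_eq0.
clearbody r.
(* The test vector e_j + c e_i has quadratic form M j j - 2 r = -1. *)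
pose c := - r / (M i j)^*.
have := hM (fun k => 1 * (k == j)%:R + c * (k == i)%:R).
rewrite -/(qform M _) qform_two mii mulr0 addr0 (psd_herm i j hM).
have -> : 1^* * 1 * M j j + 1^* * c * (M i j)^* + c^* * 1 * M i j = M j j - r * 2.
  rewrite /c conjC1 !mul1r mulr1 !(rmorphM, rmorphN, fmorphV) /= conjCK.
  rewrite (geC0_conj r_ge0) mulNr -mulrA mulVf // -mulNr -mulrA mulVf //.
  by rewrite mulr2n; ring.
by rewrite r2 opprD addrA subrr sub0r oppr_ge0 ler10.
Qed.

Lemma psd_schur (I : finType) (M : mx R I I) i0 :
  psd M -> psd (fun k l => M k l - M k i0 * M i0 l / M i0 i0).
Proof.
move=> hM v; set m := M i0 i0.
have [m0|m_neq0] := eqVneq m 0.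
  (* The matrix is then M itself, as x / 0 = 0. *)
  by under eq_bigr do under eq_bigr do rewrite m0 invr0 mulr0 subr0; exact: hM.
have m_real : m^* = m by rewrite geC0_conj // psd_diag.
set b := \sum_l M i0 l * v l.
have b_conj : \sum_k (v k)^* * M k i0 = b^*.
  rewrite /b rmorph_sum; apply: eq_bigr => k _.
  by rewrite rmorphM /= (psd_herm i0 k hM) mulrC.
have expand : \sum_k \sum_l (v k)^* * (M k l - M k i0 * M i0 l / m) * v l =
    qform M v - b^* * b / m.
  rewrite /qform -b_conj /b mulr_suml mulr_suml -sumrB; apply: eq_bigr => k _.
  by rewrite mulr_sumr mulr_suml -sumrB; apply: eq_bigr => l _; field.
have := hM (fun k => v k + (- b / m) * (k == i0)%:R).
rewrite -/(qform M _) qform_add_delta -/b -/m b_conj !(rmorphM, rmorphN, fmorphV) /= m_real.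
by rewrite expand (_ : _ + _ * m = qform M v - b^* * b / m) //; field.
Qed.

(* Cholesky-type induction: the Schur complement at i0 \in D is supported in
   D :\ i0 and differs from M by the outer product of the column
   M _ i0 / sqrt (M i0 i0).  When M i0 i0 = 0 this column is 0 (x / 0 = 0) and
   row i0 of M already vanishes. *)
Lemma psd_gram_supp (I : finType) (D : {set I}) (M : mx R I I) :
  psd M -> (forall i j, i \notin D -> M i j = 0) ->
  exists w : I -> I -> C, (forall s i, s \notin D -> w s i = 0) /\
    forall i j, M i j = \sum_s w s i * (w s j)^*.
Proof.
have [n] := ubnP #|D|; elim: n D M => // n IH D M leDn hM M_supp.
have [D0|[i0 i0D]] := set_0Vmem D.
  exists (fun _ _ => 0); split=> // i j.
  by rewrite M_supp ?D0 ?inE // big1 // => s _; rewrite mul0r.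
set m := M i0 i0; set r := sqrtC m.
set M' := fun k l => M k l - M k i0 * M i0 l / m.
have r_ge0 : 0 <= r by rewrite sqrtC_ge0 psd_diag.
have rr : r * r = m by rewrite -expr2 sqrtCK.
have M'_supp i j : i \notin D :\ i0 -> M' i j = 0.
  rewrite !inE negb_and negbK => /orP[/eqP->|iD].
    have [m0|m_neq0] := eqVneq m 0; last by rewrite /M' mulrAC divff ?mul1r ?subrr.
    by rewrite /M' (psd_zero_row j hM m0) !(mulr0, mul0r) subrr.
  by rewrite /M' (M_supp i j) // (M_supp i i0) // !mul0r subrr.
have ltD : (#|D :\ i0| < n)%N := leq_trans (proper_card (properD1 i0D)) leDn.
have [w' [w'_supp M'E]] := IH _ M' ltD (psd_schur i0 hM) M'_supp.
have w'_i0 i : w' i0 i = 0 by apply: w'_supp; rewrite !inE eqxx.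
exists (fun s => if s == i0 then fun k => M k i0 / r else w' s); split.
  move=> s i sD; have /negbTE-> : s != i0 by apply: contraNneq sD => ->.
  by apply: w'_supp; rewrite !inE negb_and sD orbT.
move=> i j; rewrite (bigD1 i0) //= eqxx.
under eq_bigr => s /negbTE s_neq_i0 do rewrite s_neq_i0.
have := M'E i j; rewrite (bigD1 i0) //= w'_i0 mul0r add0r => <-.
rewrite /M' rmorphM fmorphV /= (geC0_conj r_ge0) -(psd_herm j i0 hM) -/m -rr invfM.
by ring.
Qed.

Lemma psd_gram (I : finType) (M : mx R I I) : psd M ->
  exists w : I -> I -> C, forall i j, M i j = \sum_s w s i * (w s j)^*.
Proof.
move=> hM; have [i j|w [_ Mw]] := @psd_gram_supp I [set: I] M hM; first by rewrite inE.
by exists w.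
Qed.

Lemma psd_outer (I : finType) (u : I -> C) : psd (fun i j => (u i)^* * u j).
Proof.
move=> v; have -> : \sum_i \sum_j (v i)^* * ((u i)^* * u j) * v j =
    (\sum_i u i * v i)^* * (\sum_j u j * v j).
  rewrite rmorph_sum mulr_suml; apply: eq_bigr => i _.
  by rewrite mulr_sumr; apply: eq_bigr => j _; rewrite rmorphM /=; ring.
by rewrite mulrC mul_conjC_ge0.
Qed.

Lemma psd_sum (S P : finType) (F : S -> mx R P P) :
  (forall s, psd (F s)) -> psd (fun p q => \sum_s F s p q).
Proof.
move=> hF v; under eq_bigr do under eq_bigr do rewrite mulr_sumr mulr_suml.
under eq_bigr do rewrite exchange_big; rewrite exchange_big.
by apply: sumr_ge0 => s _; exact: hF.
Qed.

Lemma psd_congruence (K P : finType) (B : K -> P -> C) (rho : mx R K K) :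
  psd rho -> psd (fun p q => \sum_k \sum_l (B k p)^* * rho k l * B l q).
Proof.
move=> hrho v.
have -> : \sum_p \sum_q (v p)^* * (\sum_k \sum_l (B k p)^* * rho k l * B l q) * v q =
    qform rho (fun k => \sum_p B k p * v p).
  under eq_bigr do under eq_bigr do rewrite mulr_sumr mulr_suml.
  under eq_bigr do under eq_bigr do under eq_bigr do rewrite mulr_sumr mulr_suml.
  under eq_bigr do rewrite exchange_big; rewrite exchange_big.
  under eq_bigr do under eq_bigr do rewrite exchange_big.
  under eq_bigr do rewrite exchange_big.
  apply: eq_bigr => k _; apply: eq_bigr => l _.
  rewrite rmorph_sum !mulr_suml; apply: eq_bigr => p _.
  by rewrite mulr_sumr; apply: eq_bigr => q _; rewrite rmorphM /=; ring.
exact: hrho.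
Qed.

Lemma sum_pair (I J : finType) (G : I * J -> C) :
  \sum_k G k = \sum_i \sum_j G (i, j).
Proof. by rewrite pair_bigA; apply: eq_bigr => -[]. Qed.

Lemma sum_delta_fst (I J : finType) (G : I * J -> C) i :
  \sum_k (k.1 == i)%:R * G k = \sum_j G (i, j).
Proof. by rewrite sum_pair /=; under eq_bigr do rewrite -mulr_sumr; exact: sum_delta_l. Qed.

Lemma eunitE (I : finType) (x x' i j : I) :
  eunit R x x' i j = (i == x)%:R * (j == x')%:R.
Proof. by rewrite /eunit -natrM mulnb. Qed.

Lemma mtr_eunit (I : finType) (x x' : I) : mtr (eunit R x x') = (x == x')%:R.
Proof. by rewrite /mtr; under eq_bigr do rewrite eunitE; rewrite sum_delta_l eq_sym. Qed.

(* rho |-> Tr_S (Ubar rho Ubar^* ) with Ubar the entrywise conjugate of U: the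
   Stinespring channel in the form produced by Gamma, whose entries
   sigma (W_{c,z}^* W_{c',z'}) are conjugate-linear in W_{c,z}. *)
Definition stinespring (X A S : finType) (U : mx R (A * S) X) : mx R X X -> mx R A A :=
  fun rho a a' => \sum_x \sum_x' rho x x' * \sum_s (U (a, s) x)^* * U (a', s) x'.

Section Stinespring.
Variables (X A S : finType) (U : mx R (A * S) X).

Lemma stinespring_eunit x x' a a' :
  stinespring U (eunit R x x') a a' = \sum_s (U (a, s) x)^* * U (a', s) x'.
Proof.
rewrite /stinespring; under eq_bigr do under eq_bigr do rewrite eunitE -mulrA.
by under eq_bigr do rewrite -mulr_sumr sum_delta_l; rewrite sum_delta_l.
Qed.

Lemma stinespring_linear : linear_map (stinespring U).
Proof.
move=> c rho sigma a a'; rewrite /stinespring mulr_sumr -big_split.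
apply: eq_bigr => x _; rewrite mulr_sumr -big_split.
by apply: eq_bigr => x' _ /=; rewrite mulrDl mulrA.
Qed.

Lemma stinespring_cp : completely_positive (stinespring U).
Proof.
move=> n rho hrho.
pose B s (k : 'I_n * X) (p : 'I_n * A) := (k.1 == p.1)%:R * U (p.2, s) k.2.
have -> : (fun p q => stinespring U (fun x y => rho (p.1, x) (q.1, y)) p.2 q.2) =
    (fun p q => \sum_s \sum_k \sum_l (B s k p)^* * rho k l * B s l q).
  apply: funext => p; apply: funext => q; rewrite /stinespring.
  under eq_bigr do under eq_bigr do rewrite mulr_sumr.
  under eq_bigr do rewrite exchange_big; rewrite exchange_big; apply: eq_bigr => s _.
  have term k l : (B s k p)^* * rho k l * B s l q = (k.1 == p.1)%:R *
      ((l.1 == q.1)%:R * ((U (p.2, s) k.2)^* * rho k l * U (q.2, s) l.2)).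
    by rewrite /B rmorphM /= conjC_nat; ring.
  under [RHS]eq_bigr do under eq_bigr do rewrite term.
  under [RHS]eq_bigr do rewrite -mulr_sumr sum_delta_fst.
  rewrite sum_delta_fst; apply: eq_bigr => x _; apply: eq_bigr => x' _ /=.
  by ring.
by apply: psd_sum => s; exact: psd_congruence.
Qed.

Lemma stinespring_tp : isometry U -> trace_preserving (stinespring U).
Proof.
move=> hU rho; rewrite /mtr /stinespring exchange_big; apply: eq_bigr => x _.
rewrite exchange_big /=; under eq_bigr do rewrite -mulr_sumr.
have iso x' : \sum_a \sum_s (U (a, s) x)^* * U (a, s) x' = (x' == x)%:R.
  by have := hU x x'; rewrite /mxmul /adj /idm sum_pair eq_sym.
by under eq_bigr do rewrite iso; exact: sum_delta_r.
Qed.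

Lemma stinespring_channel : isometry U -> quantum_channel (stinespring U).
Proof.
by move=> hU; split; [exact: stinespring_linear|exact: stinespring_cp|exact: stinespring_tp].
Qed.

End Stinespring.

Lemma channel_stinespring (X A : finType) (Phi : mx R X X -> mx R A A) :
  quantum_channel Phi -> exists U : mx R (A * ('I_#|X| * A)) X,
    isometry U /\ forall x x' a a',
      Phi (eunit R x x') a a' = stinespring U (eunit R x x') a a'.
Proof.
case=> _ Phi_cp Phi_tp.
(* Complete positivity applied to the unnormalised maximally entangled vector
   omega (indexed by 'I_#|X| * X, as completely_positive only quantifies over
   'I_n) makes the Choi matrix
   ((i, a), (j, a')) |-> Phi (eunit (enum_val i) (enum_val j)) a a' positive;
   U is read off from its Gram vectors. *)
pose omega (p : 'I_#|X| * X) : C := (p.2 == enum_val p.1)%:R.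
have choiE i j : (fun x y => (omega (i, x))^* * omega (j, y)) = eunit R (enum_val i) (enum_val j).
  by do 2!apply: funext => ?; rewrite /omega conjC_nat eunitE.
have [w Phi_w] := psd_gram (Phi_cp _ _ (psd_outer omega)).
pose U (k : A * ('I_#|X| * A)) x := (w k.2 (enum_rank x, k.1))^*.
have PhiE x x' a a' : Phi (eunit R x x') a a' = stinespring U (eunit R x x') a a'.
  rewrite stinespring_eunit; under eq_bigr do rewrite conjCK.
  by have := Phi_w (enum_rank x, a) (enum_rank x', a'); rewrite /= choiE !enum_rankK.
exists U; split=> // x x'.
rewrite /mxmul /adj /idm sum_pair -mtr_eunit -Phi_tp /mtr.
by apply: eq_bigr => a _; rewrite PhiE stinespring_eunit.
Qed.

Lemma eq_tensor_map (X Y A B : finType) (Phi Phi' : mx R X X -> mx R A A)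
    (Psi Psi' : mx R Y Y -> mx R B B) :
  (forall x x' a a', Phi (eunit R x x') a a' = Phi' (eunit R x x') a a') ->
  (forall y y' b b', Psi (eunit R y y') b b' = Psi' (eunit R y y') b b') ->
  forall rho p q, tensor_map Phi Psi rho p q = tensor_map Phi' Psi' rho p q.
Proof.
move=> PhiE PsiE rho p q; apply: eq_bigr => x _; apply: eq_bigr => x' _.
by apply: eq_bigr => y _; apply: eq_bigr => y' _; rewrite PhiE PsiE.
Qed.

Section States.
Variable I : finType.

Lemma state_sum (sigma : mx R I I -> C) (J : finType) (c : J -> C) (F : J -> mx R I I) :
  state sigma -> sigma (fun x y => \sum_j c j * F j x y) = \sum_j c j * sigma (F j).
Proof.
case=> sigma_lin _ _.
have sigma0 : sigma (fun _ _ => 0) = 0.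
  have zero : (fun x y : I => -1 * (fun _ _ => 0 : C) x y + (fun _ _ => 0 : C) x y) =
      (fun _ _ => 0) by do 2!apply: funext => ?; rewrite mulr0 addr0.
  by have := sigma_lin (-1) (fun _ _ => 0) (fun _ _ => 0); rewrite zero mulN1r addNr.
elim: (index_enum J) => [|j r IH].
  rewrite big_nil -sigma0; congr sigma.
  by do 2!apply: funext => ?; rewrite big_nil.
have cons : (fun x y : I => \sum_(i <- j :: r) c i * F i x y) =
    (fun x y => c j * F j x y + (fun x y => \sum_(i <- r) c i * F i x y) x y).
  by do 2!apply: funext => ?; rewrite big_cons.
by rewrite cons sigma_lin IH big_cons.
Qed.

Lemma idm_sum_eunit : @idm R I = (fun x y => \sum_(i : I) 1 * eunit R i i x y).
Proof.
apply: funext => x; apply: funext => y.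
by under eq_bigr do rewrite mul1r eunitE eq_sym (eq_sym y); rewrite sum_delta_l.
Qed.

Lemma mxmul_adj_eunit (i : I) : mxmul (adj (eunit R i i)) (eunit R i i) = eunit R i i.
Proof.
apply: funext => k; apply: funext => l; rewrite /mxmul /adj.
have term m : (eunit R i i m k)^* * eunit R i i m l = (m == i)%:R * eunit R i i k l.
  by rewrite !eunitE rmorphM /= !conjC_nat; case: (m == i); rewrite ?mul0r ?mul1r.
by under eq_bigr do rewrite term; rewrite sum_delta_l.
Qed.

Lemma state_weights (sigma : mx R I I -> C) : state sigma ->
  exists lam : I -> R, [/\ forall i, 0 <= lam i, \sum_i lam i = 1 &
    forall i, sigma (eunit R i i) = ((lam i)%:C)%C].
Proof.
move=> st; have [_ sigma_pos sigma1] := st.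
have ReE i : ((complex.Re (sigma (eunit R i i)))%:C)%C = sigma (eunit R i i).
  by rewrite RRe_real // ger0_real // -mxmul_adj_eunit.
exists (fun i => complex.Re (sigma (eunit R i i))); split=> // [i|].
  by rewrite -ler0c ReE -mxmul_adj_eunit.
apply: (@complexI R); rewrite rmorph_sum /=.
under eq_bigr do rewrite ReE -[sigma _]mul1r.
by rewrite -state_sum // -idm_sum_eunit sigma1.
Qed.

Definition diag_state (lam : I -> R) (M : mx R I I) : C := \sum_i ((lam i)%:C)%C * M i i.

Lemma diag_state_eunit lam (i : I) : diag_state lam (eunit R i i) = ((lam i)%:C)%C.
Proof.
by rewrite /diag_state; under eq_bigr do rewrite eunitE -natrM mulnb andbb; exact: sum_delta_r.
Qed.

Lemma diag_stateP lam : (forall i, 0 <= lam i) -> \sum_i lam i = 1 ->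
  state (diag_state lam).
Proof.
move=> lam_ge0 lam_sum; split.
- move=> a S T; rewrite /diag_state mulr_sumr -big_split.
  by apply: eq_bigr => i _ /=; ring.
- move=> T; apply: sumr_ge0 => i _; rewrite mulr_ge0 ?ler0c //.
  by apply: sumr_ge0 => k _; rewrite mulrC; exact: mul_conjC_ge0.
- rewrite /diag_state /idm; under eq_bigr do rewrite eqxx mulr1.
  by rewrite -rmorph_sum lam_sum.
Qed.

End States.

Section LocalBlockOperators.
Variables (X Y A B I : finType) (S T : I -> finType).
Variables (U : forall i, mx R (A * S i) X) (V : forall i, mx R (B * T i) Y).
Arguments U : clear implicits.
Arguments V : clear implicits.

Lemma mxmul_locW p q z z' :
  mxmul (adj (locW U V p z)) (locW U V q z') = (fun j j' => \sum_(i : I)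
    (stinespring (U i) (eunit R z.1 z'.1) p.1 q.1 *
     stinespring (V i) (eunit R z.2 z'.2) p.2 q.2) * eunit R i i j j').
Proof.
apply: funext => j; apply: funext => j'; rewrite /mxmul /adj /locW.
rewrite -(sig_big_dep (fun _ => true) (fun _ _ => true) (fun i (st : S i * T i) =>
  ((i == j)%:R * U i (p.1, st.1) z.1 * V i (p.2, st.2) z.2)^* *
  ((i == j')%:R * U i (q.1, st.1) z'.1 * V i (q.2, st.2) z'.2))) /=.
apply: eq_bigr => i _; rewrite !stinespring_eunit !mulr_suml.
under [RHS]eq_bigr do rewrite mulr_sumr mulr_suml; rewrite pair_bigA.
apply: eq_bigr => -[s t] _ /=; rewrite eunitE !rmorphM /= !conjC_nat.
by rewrite (eq_sym j) (eq_sym j'); ring.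
Qed.

Lemma Gamma_locW (sigma : mx R I I -> C) rho p q : state sigma ->
  Gamma (locW U V) sigma rho p q = \sum_(i : I) sigma (eunit R i i) *
    tensor_map (stinespring (U i)) (stinespring (V i)) rho p q.
Proof.
move=> st; rewrite /Gamma.
under eq_bigr do under eq_bigr do rewrite mxmul_locW state_sum // mulr_sumr.
under eq_bigr do rewrite exchange_big; rewrite exchange_big; apply: eq_bigr => i _.
rewrite sum_pair; under eq_bigr do under eq_bigr do rewrite sum_pair.
rewrite /tensor_map mulr_sumr; apply: eq_bigr => x _.
rewrite exchange_big mulr_sumr; apply: eq_bigr => x' _.
rewrite mulr_sumr; apply: eq_bigr => y _; rewrite mulr_sumr; apply: eq_bigr => y' _ /=.
by ring.
Qed.

End LocalBlockOperators.

End QuantumChannels.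

Theorem proposition5p1 (R : realType) (X Y A B : finType)
  (hX : (0 < #|X|)%N) (hY : (0 < #|Y|)%N) (hA : (0 < #|A|)%N) (hB : (0 < #|B|)%N)
  (Phi : mx R (X * Y) (X * Y) -> mx R (A * B) (A * B)) :
  QC_Rloc Phi <-> Qloc Phi.
Proof.
split.
- case=> I [S [T [U [V [sigma [isoU isoV st PhiE]]]]]].
  have [lam [lam_ge0 lam_sum sigmaE]] := state_weights st.
  exists I, lam, (fun i => stinespring (U i)), (fun i => stinespring (V i)).
  split=> // [i|i|rho p q].
  + exact: stinespring_channel.
  + exact: stinespring_channel.
  + by rewrite PhiE Gamma_locW //; apply: eq_bigr => i _; rewrite sigmaE.
- case=> J [lam [Phis [Psis [lam_ge0 lam_sum chPhi chPsi PhiE]]]].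
  have [U hU] := choice (fun j => channel_stinespring (chPhi j)).
  have [V hV] := choice (fun j => channel_stinespring (chPsi j)).
  have st := diag_stateP lam_ge0 lam_sum.
  exists J, (fun=> ('I_#|X| * A)%type : finType), (fun=> ('I_#|Y| * B)%type : finType).
  exists U, V, (diag_state lam); split=> // [j|j|rho p q].
  + by case: (hU j).
  + by case: (hV j).
  + rewrite PhiE Gamma_locW //; apply: eq_bigr => j _; rewrite diag_state_eunit.
    by congr (_ * _); apply: eq_tensor_map; [case: (hU j)|case: (hV j)].
Qed.
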